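(* Let $\tau\in\mathscr C^r(\mathbb{S}^1,\mathbb{R})$, fix $R>\|\tau'\|_\infty$ and $\rho>0$. Let $I_j=(a_j,b_j)$, $1\le j\le J$, be open intervals covering $[\log\lambda,\log\Lambda]$ with $b_j-a_j<\rho/3$; let $N=\lceil 6\rho^{-1}\log\lceil2\Lambda\rceil\rceil$; and let $q$ be a positive integer with $(q+1)N e^{-q\rho/2}<1/(4J)$ and $\ell^q\ge 2(q+1)N$. If $\mathcal N(\tau)\ge e^\rho$, then for infinitely many $n\ge q$ there exist a point $z_0=(x,s)\in\mathbb{T}^2$, a unit vector $v_0\in\mathbb{R}^2$, an integer $1\le j\le J$, a subset $B\subset\mathcal A^q$ with $\#B=2(q+1)N$, and for each $\beta\in B$ a subset $\Sigma(\beta)\subset\mathcal A^n$ with $\#\Sigma(\beta)\ge e^{\rho n}\ell^{-q}/(2J)$, such that for every $\beta\in B$ and every $\alpha\in\Sigma(\beta)$: $[\alpha]_q=\beta$, $v_0\in Df^n(x_\alpha)\mathscr K_R$, and $(E^n)'(x_\alpha)\in[e^{a_j n},e^{b_j n}]$.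
   Context: $\mathbb{S}^1=\mathbb{R}/\mathbb{Z}$, $\mathbb{T}^2=\mathbb{S}^1\times\mathbb{S}^1$, $r\ge2$. $E:\mathbb{S}^1\to\mathbb{S}^1$ is a $\mathscr C^r$ expanding map of degree $\ell\ge2$ with $1<\lambda\le E'(x)\le\Lambda$ for all $x$, and $0$ is a fixed point of $E$. For $\tau\in\mathscr C^r(\mathbb{S}^1,\mathbb{R})$, $f(x,s)=(E(x),s+\tau(x)\bmod1)$; $Df(x,s)=\begin{pmatrix}E'(x)&0\\ \tau'(x)&1\end{pmatrix}$ depends only on $x$, and $Df^n(y)$ denotes $Df^n(y,s)$ for any $s$. For $R>0$, $\vartheta_R=R/(\lambda-1)$, $\mathscr K_R=\{(\xi,\eta):|\eta|\le\vartheta_R|\xi|\}$; for $R>\|\tau'\|_\infty$, $\mathcal N(\tau,R;n)=\sup_{z}\sup_{v}\#\{\zeta\in f^{-n}(z):v\in Df^n(\zeta)\mathscr K_R\}$ (sup over $z\in\mathbb{T}^2$ and unit vectors $v$) and $\mathcal N(\tau)=\lim_n\mathcal N(\tau,R;n)^{1/n}$ (exists, independent of $R$). Symbolic coding: $\mathcal A=\{0,\dots,\ell-1\}$; the $\ell$ points of $E^{-1}(0)$ divide $\mathbb{S}^1$ into half-open intervals $\mathcal I(j)$, $j\in\mathcal A$, each mapped bijectively onto $\mathbb{S}^1$ by $E$. For $\alpha=(\alpha_n,\dots,\alpha_1)\in\mathcal A^n$, $\mathcal I(\alpha)=\bigcap_{i=0}^{n-1}E^{-i}(\mathcal I(\alpha_{n-i}))$,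 which $E^n$ maps bijectively onto $\mathbb{S}^1$; for $x\in\mathbb{S}^1$, $x_\alpha$ is the unique point of $\mathcal I(\alpha)$ with $E^n(x_\alpha)=x$. For $1\le p\le n$, $[\alpha]_p=(\alpha_p,\dots,\alpha_1)\in\mathcal A^p$. *)

From Stdlib Require Export Reals List.
Open Scope R_scope.

Definition Rfloor (x : R) : Z := (up x - 1)%Z.
Definition Rceil (x : R) : Z := (- Rfloor (- x))%Z.
Definition Rfrac (x : R) : R := x - IZR (Rfloor x).

(* points of S^1 = R/Z and of T^2 are represented by coordinates in [0,1) *)
Definition InUnit (x : R) : Prop := 0 <= x < 1.

Definition is_Cr (r : nat) (f : R -> R) : Prop :=
  exists d : nat -> R -> R,
    d 0%nat = f /\
    (forall k x, (k < r)%nat -> derivable_pt_lim (d k) x (d (S k) x)) /\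
    continuity (d r).

(* E : S^1 -> S^1 given by its lift F (F(x+1) = F(x) + l, F(0) = 0) *)
Definition Emap (F : R -> R) (x : R) : R := Rfrac (F x).

Definition fmap (F tau : R -> R) (p : R * R) : R * R :=
  (Emap F (fst p), Rfrac (snd p + tau (fst p))).

Record mat2 := Mat2 { m11 : R; m12 : R; m21 : R; m22 : R }.
Definition mmul (A B : mat2) : mat2 :=
  Mat2 (m11 A * m11 B + m12 A * m21 B) (m11 A * m12 B + m12 A * m22 B)
       (m21 A * m11 B + m22 A * m21 B) (m21 A * m12 B + m22 A * m22 B).
Definition mapply (A : mat2) (w : R * R) : R * R :=
  (m11 A * fst w + m12 A * snd w, m21 A * fst w + m22 A * snd w).

Definition Dfmat (dF dtau : R -> R) (y : R) : mat2 := Mat2 (dF y) 0 (dtau y) 1.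

(* Df^n(y) = Df(E^{n-1} y) ... Df(y)  (chain rule), i.e. Df^{n+1}(y) = Df^n(E y) Df(y) *)
Fixpoint Dfn (F dF dtau : R -> R) (n : nat) (y : R) : mat2 :=
  match n with
  | O => Mat2 1 0 0 1
  | S k => mmul (Dfn F dF dtau k (Emap F y)) (Dfmat dF dtau y)
  end.

Fixpoint dEn (F dF : R -> R) (n : nat) (y : R) : R :=
  match n with
  | O => 1
  | S k => dEn F dF k (Emap F y) * dF y
  end.

Definition cone (theta : R) (w : R * R) : Prop := Rabs (snd w) <= theta * Rabs (fst w).
Definition in_img_cone (M : mat2) (theta : R) (v : R * R) : Prop :=
  exists w, cone theta w /\ v = mapply M w.
Definition thetaR (Rc lam : R) : R := Rc / (lam - 1).

(* symbolic coding: I(j) = { y in [0,1) : j <= F y < j+1 }, i.e. [c_j, c_{j+1})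
   where c_0 = 0 < c_1 < ... < c_l = 1 are the points of E^{-1}(0). *)
Definition Icyl (F : R -> R) (j : nat) (y : R) : Prop :=
  InUnit y /\ INR j <= F y < INR j + 1.

(* words alpha = (alpha_n, ..., alpha_1) in A^n, stored as the list
   [alpha_n; ...; alpha_1]; so nth i alpha = alpha_{n-i}. *)
Definition is_word (l n : nat) (alpha : list nat) : Prop :=
  length alpha = n /\ Forall (fun a => (a < l)%nat) alpha.

(* [alpha]_p = (alpha_p, ..., alpha_1) *)
Definition trunc (p : nat) (alpha : list nat) : list nat :=
  skipn (length alpha - p) alpha.

(* y = x_alpha : y in I(alpha) and E^n(y) = x *)
Definition is_x_alpha (F : R -> R) (x : R) (alpha : list nat) (y : R) : Prop :=
  InUnit y /\ Nat.iter (length alpha) (Emap F) y = x /\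
  forall i, (i < length alpha)%nat -> Icyl F (nth i alpha 0%nat) (Nat.iter i (Emap F) y).

Definition has_card {T : Type} (P : T -> Prop) (k : nat) : Prop :=
  exists L : list T, NoDup L /\ length L = k /\ forall p, In p L <-> P p.

Definition unit_vec (v : R * R) : Prop := fst v ^ 2 + snd v ^ 2 = 1.

Definition good_preimage (F tau dF dtau : R -> R) (theta : R) (n : nat)
  (z v zeta : R * R) : Prop :=
  InUnit (fst zeta) /\ InUnit (snd zeta) /\
  Nat.iter n (fmap F tau) zeta = z /\
  in_img_cone (Dfn F dF dtau n (fst zeta)) theta v.

Definition Ncounts (F tau dF dtau : R -> R) (theta : R) (n : nat) (c : R) : Prop :=
  exists z v k, InUnit (fst z) /\ InUnit (snd z) /\ unit_vec v /\
    has_card (good_preimage F tau dF dtau theta n z v) k /\ c = INR k.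

(* N(tau) >= c : with N(tau,R;n) = sup of the counts, N(tau) = lim N(tau,R;n)^{1/n} *)
Definition Ntau_ge (F tau dF dtau : R -> R) (Rc lam c : R) : Prop :=
  exists (Nseq : nat -> R) (L : R),
    (forall n, is_lub (Ncounts F tau dF dtau (thetaR Rc lam) n) (Nseq n)) /\
    Un_cv (fun n => Rpower (Nseq n) (/ INR n)) L /\ c <= L.

Definition Nconst (rho Lam : R) : nat :=
  Z.to_nat (Rceil (6 / rho * ln (IZR (Rceil (2 * Lam))))).

From Stdlib Require Import Reals List.
From Stdlib Require Import Lra Lia Classical ZArith.
Open Scope R_scope.

(* Grouping the preimages under [f^(p+k)] by their [f^k]-image makes the counts [N(n)]
   submultiplicative; with [N(tau) >= e^rho] this gives [N(n) >= e^(rho n)] for every [n], and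
   then infinitely many [n] with [N(n) >= e^(q rho / 2) N(n - q)].  At such an [n] take [z, v]
   realising [N(n)].  One window [[a_j, b_j]] for the exponent [log (E^n)'/n] catches a [1/J]
   share of the preimages.  Sorted by their last [q] symbols, these fall into classes of at most
   [N(n - q)] elements (a class has a single [f^(n-q)]-image), while the classes smaller than
   [e^(rho n) l^-q / (2J)] hold at most half of the share; so more than
   [e^(q rho / 2) / (2J) > 2(q+1)N] classes are at least that large. *)

Lemma Rfloor_spec x : IZR (Rfloor x) <= x < IZR (Rfloor x) + 1.
Proof. unfold Rfloor. destruct (archimed x). rewrite minus_IZR. lra. Qed.

Lemma Rfloor_nonneg x : 0 <= x -> (0 <= Rfloor x)%Z.
Proof.
  intro Hx. pose proof (Rfloor_spec x).
  assert (Hlt : -1 < IZR (Rfloor x)) by lra. apply lt_IZR in Hlt. lia.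
Qed.

Lemma Rfrac_InUnit x : InUnit (Rfrac x).
Proof. unfold InUnit, Rfrac. pose proof (Rfloor_spec x). lra. Qed.

Lemma exp_le_compat x y : x <= y -> exp x <= exp y.
Proof. intro H. destruct (Req_dec x y) as [->|]; [lra|]. left; apply exp_increasing; lra. Qed.

Lemma ln_le_compat x y : 0 < x -> x <= y -> ln x <= ln y.
Proof. intros H1 H2. destruct (Req_dec x y) as [->|]; [lra|]. left; apply ln_increasing; lra. Qed.

(* Stdlib's [ln] takes the junk value [0] off [(0, +oo)]. *)
Lemma ln_nonpos x : ~ 0 < x -> ln x = 0.
Proof. intro H. unfold ln. destruct (Rlt_dec 0 x); [contradiction|reflexivity]. Qed.

Lemma exp_pow_INR x k : exp x ^ k = exp (INR k * x).
Proof.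
  induction k as [|k IH]; [simpl; now rewrite Rmult_0_l, exp_0|].
  change (exp x ^ S k) with (exp x * exp x ^ k).
  rewrite IH, <- exp_plus, S_INR. f_equal. ring.
Qed.

Definition R2_eq_dec (p q : R * R) : {p = q} + {p <> q}.
Proof. decide equality; apply Req_dec_T. Defined.

Lemma list_sum_map_le {A} (c : A -> nat) (js : list A) m :
  (forall j, In j js -> (c j <= m)%nat) -> (list_sum (map c js) <= length js * m)%nat.
Proof.
  induction js as [|j js IH]; intros H; simpl; [lia|].
  specialize (IH (fun j' Hj' => H j' (or_intror Hj'))). specialize (H j (or_introl eq_refl)). lia.
Qed.

Lemma INR_list_sum_map_le {A} (c : A -> nat) (js : list A) m :
  (forall j, In j js -> INR (c j) <= m) -> INR (list_sum (map c js)) <= INR (length js) * m.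
Proof.
  induction js as [|j js IH]; intros H; [simpl; lra|].
  change (INR (c j + list_sum (map c js)) <= INR (S (length js)) * m).
  rewrite plus_INR, S_INR.
  specialize (IH (fun j' Hj' => H j' (or_intror Hj'))). specialize (H j (or_introl eq_refl)). lra.
Qed.

Lemma list_sum_map_filter_split {A} (c : A -> nat) (p : A -> bool) (L : list A) :
  list_sum (map c L) =
  (list_sum (map c (filter p L)) + list_sum (map c (filter (fun x => negb (p x)) L)))%nat.
Proof. induction L as [|x L IH]; simpl; [reflexivity|]. destruct (p x); simpl; lia. Qed.

Lemma list_sum_map_add {A} (f g : A -> nat) (L : list A) :
  list_sum (map (fun x => (f x + g x)%nat) L) = (list_sum (map f L) + list_sum (map g L))%nat.
Proof. induction L as [|x L IH]; simpl; lia. Qed.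

Lemma length_le_sum_filter {A B} (p : B -> A -> bool) (js : list B) (L : list A) :
  (forall x, In x L -> exists j, In j js /\ p j x = true) ->
  (length L <= list_sum (map (fun j => length (filter (p j) L)) js))%nat.
Proof.
  induction L as [|x L IH]; intros Hcov; [simpl; lia|].
  assert (Hx : (1 <= list_sum (map (fun j => if p j x then 1 else 0) js))%nat).
  { destruct (Hcov x (or_introl eq_refl)) as [j [Hj Hp]]. clear - Hj Hp.
    induction js as [|j' js IH]; simpl in *; [contradiction|].
    destruct Hj as [<-|Hj]; [rewrite Hp; lia|]. specialize (IH Hj). lia. }
  specialize (IH (fun y Hy => Hcov y (or_intror Hy))).
  assert (Hcons : forall j, length (filter (p j) (x :: L))
                            = ((if p j x then 1 else 0) + length (filter (p j) L))%nat)
    by (intro j; simpl; destruct (p j x); reflexivity).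
  rewrite (map_ext _ _ Hcons), list_sum_map_add. simpl length. lia.
Qed.

Definition Rleb (x y : R) : bool := if Rle_dec x y then true else false.

Lemma Rleb_spec x y : Rleb x y = true <-> x <= y.
Proof. unfold Rleb. destruct (Rle_dec x y); split; intro; auto; contradiction || discriminate. Qed.

Definition in_window (lo hi d : R) : bool := Rleb lo d && Rleb d hi.

Lemma in_window_spec lo hi d : in_window lo hi d = true <-> lo <= d <= hi.
Proof. unfold in_window. now rewrite Bool.andb_true_iff, !Rleb_spec. Qed.

Lemma INR_list_sum_le_heavy {A} (c : A -> nat) (W : list A) (thr Nmax : R) : 0 <= thr ->
  (forall x, In x W -> INR (c x) <= Nmax) ->
  INR (list_sum (map c W)) <=
  INR (length (filter (fun x => Rleb thr (INR (c x))) W)) * Nmax + INR (length W) * thr.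
Proof.
  intros Hthr Hmax. rewrite (list_sum_map_filter_split c (fun x => Rleb thr (INR (c x)))), plus_INR.
  apply Rplus_le_compat.
  - apply INR_list_sum_map_le. intros x Hx. apply filter_In in Hx. apply Hmax, Hx.
  - apply Rle_trans with (INR (length (filter (fun x => negb (Rleb thr (INR (c x)))) W)) * thr).
    + apply INR_list_sum_map_le. intros x Hx. apply filter_In in Hx as [_ Hx].
      apply Bool.negb_true_iff in Hx. left. apply Rnot_le_lt. rewrite <- Rleb_spec. congruence.
    + apply Rmult_le_compat_r; [exact Hthr|]. apply le_INR, filter_length_le.
Qed.

Lemma exists_argmax {A} (c : A -> nat) (js : list A) : js <> nil ->
  exists j, In j js /\ forall j', In j' js -> (c j' <= c j)%nat.
Proof.
  induction js as [|j js IH]; intros H; [congruence|].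
  destruct js as [|j1 js]; [exists j; split; [left|intros j' [<-|[]]]; auto|].
  destruct IH as [m [Hm Hmax]]; [discriminate|].
  destruct (le_lt_dec (c j) (c m)).
  - exists m. split; [right; exact Hm|]. intros j' [<-|Hj']; auto.
  - exists j. split; [left; reflexivity|].
    intros j' [<-|Hj']; [lia|]. specialize (Hmax j' Hj'). lia.
Qed.

Lemma pigeonhole_filter {A B} (p : B -> A -> bool) (js : list B) (L : list A) :
  js <> nil -> (forall x, In x L -> exists j, In j js /\ p j x = true) ->
  exists j, In j js /\ (length L <= length js * length (filter (p j) L))%nat.
Proof.
  intros Hjs Hcov.
  destruct (exists_argmax (fun j => length (filter (p j) L)) js Hjs) as [j [Hj Hmax]].
  exists j. split; [exact Hj|].
  eapply Nat.le_trans; [exact (length_le_sum_filter p js L Hcov)|].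
  exact (list_sum_map_le _ js _ Hmax).
Qed.

Lemma NoDup_sublist_of_length {A} (L : list A) m : NoDup L -> (m <= length L)%nat ->
  exists L', NoDup L' /\ length L' = m /\ incl L' L.
Proof.
  intros HL Hm. exists (firstn m L).
  rewrite <- (firstn_skipn m L) in HL. split; [exact (NoDup_app_remove_r _ _ HL)|].
  split; [apply firstn_length_le; exact Hm|].
  intros x Hx. rewrite <- (firstn_skipn m L). apply in_or_app. left; exact Hx.
Qed.

Lemma has_card_NoDup_length_le {T} (P : T -> Prop) k L :
  has_card P k -> NoDup L -> (forall x, In x L -> P x) -> (length L <= k)%nat.
Proof.
  intros [L0 [HL0 [<- HP]]] HL Hsub. apply NoDup_incl_length; [exact HL|].
  intros x Hx. apply HP, Hsub, Hx.
Qed.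

(* Classical: [P] is an arbitrary proposition, and one witness is picked per code in [W]. *)
Lemma has_card_of_injection {T C} (P : T -> Prop) (f : T -> C) (W : list C) :
  (forall x, P x -> In (f x) W) -> (forall x y, P x -> P y -> f x = f y -> x = y) ->
  exists k, has_card P k.
Proof.
  intros HW Hinj.
  assert (Hpart : forall W', exists L, NoDup L /\ forall x, In x L <-> P x /\ In (f x) W').
  { induction W' as [|w W' IH].
    - exists nil. split; [constructor|]. intros x; simpl; tauto.
    - destruct IH as [L [HL HLP]].
      destruct (classic (exists x, P x /\ f x = w /\ ~ In x L)) as [[x0 [Px0 [<- Hx0]]]|Hnone].
      + exists (x0 :: L). split; [constructor; assumption|]. intros x. simpl. split.
        * intros [<-|Hx]; [tauto|]. apply HLP in Hx. tauto.
        * intros [Px [Hfx|Hfx]].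
          -- destruct (classic (In x L)) as [|HxL]; [tauto|]. left. apply Hinj; auto.
          -- right. apply HLP. tauto.
      + exists L. split; [exact HL|]. intros x. simpl. split.
        * intro Hx. apply HLP in Hx. tauto.
        * intros [Px [Hfx|Hfx]]; [|apply HLP; tauto].
          apply NNPP. intro HxL. apply Hnone. exists x. auto. }
  destruct (Hpart W) as [L [HL HLP]]. exists (length L), L. do 2 (split; [auto|]).
  intros x. rewrite HLP. split; [tauto|]. intro Px. auto.
Qed.

Definition vscale (c : R) (w : R * R) : R * R := (c * fst w, c * snd w).

Definition normalize (w : R * R) : R * R := vscale (/ sqrt (fst w ^ 2 + snd w ^ 2)) w.

(* [A^{-1} v] for a lower triangular [A = [[d, 0], [c, 1]]], the shape of every [Df^n]. *)
Definition lower_inv_apply (A : mat2) (v : R * R) : R * R :=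
  (fst v / m11 A, snd v - m21 A * (fst v / m11 A)).

Lemma mapply_mmul A B w : mapply (mmul A B) w = mapply A (mapply B w).
Proof. destruct A, B, w. unfold mapply, mmul. simpl. f_equal; ring. Qed.

Lemma mapply_vscale A c w : mapply A (vscale c w) = vscale c (mapply A w).
Proof. destruct A, w. unfold mapply, vscale. simpl. f_equal; ring. Qed.

Lemma cone_vscale th c w : cone th w -> cone th (vscale c w).
Proof.
  destruct w as [w1 w2]. unfold cone, vscale. simpl. intro Hw.
  rewrite !Rabs_mult. pose proof (Rabs_pos c). nra.
Qed.

Lemma in_img_cone_vscale A th c v : in_img_cone A th v -> in_img_cone A th (vscale c v).
Proof.
  intros [w [Hw ->]]. exists (vscale c w).
  split; [apply cone_vscale, Hw|]. symmetry. apply mapply_vscale.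
Qed.

Lemma normalize_unit w : w <> (0, 0) -> unit_vec (normalize w).
Proof.
  destruct w as [w1 w2]. intro Hw. unfold unit_vec, normalize, vscale. cbn [fst snd].
  assert (Hpos : 0 < w1 ^ 2 + w2 ^ 2).
  { destruct (Rle_lt_dec (w1 ^ 2 + w2 ^ 2) 0) as [H|H]; [exfalso|exact H].
    assert (w1 = 0) by nra. assert (w2 = 0) by nra. subst. congruence. }
  pose proof (sqrt_lt_R0 _ Hpos). pose proof (sqrt_sqrt _ (Rlt_le _ _ Hpos)) as Hsq.
  set (k := sqrt (w1 ^ 2 + w2 ^ 2)) in *.
  replace ((/ k * w1) ^ 2 + (/ k * w2) ^ 2) with ((w1 ^ 2 + w2 ^ 2) / (k * k)) by (field; lra).
  rewrite Hsq. field. lra.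
Qed.

Lemma lower_inv_apply_correct A w : m12 A = 0 -> m22 A = 1 -> m11 A <> 0 ->
  lower_inv_apply A (mapply A w) = w.
Proof.
  destruct A, w as [w1 w2]. unfold mapply, lower_inv_apply. simpl. intros -> -> Hd.
  f_equal; field; exact Hd.
Qed.

Section Dynamics.
Variables (l : nat) (F dF tau dtau : R -> R) (lam Lam Rc M : R).
Hypothesis HF1 : forall x, F (x + 1) = F x + INR l.
Hypothesis HF0 : F 0 = 0.
Hypothesis HdF : forall x, derivable_pt_lim F x (dF x).
Hypothesis Hlam : 1 < lam.
Hypothesis HdFb : forall x, lam <= dF x <= Lam.
Hypothesis HM : M < Rc.
Hypothesis Hdtau : forall x, Rabs (dtau x) <= M.

Notation E := (Emap F).
Notation f := (fmap F tau).
Notation theta := (thetaR Rc lam).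
Notation Df := (Dfn F dF dtau).
Notation good := (good_preimage F tau dF dtau theta).

Lemma F_increasing x y : x < y -> F x < F y.
Proof.
  intros Hxy. assert (pr : derivable F) by (intro t; exact (exist _ (dF t) (HdF t))).
  destruct (MVT_cor1 F x y pr Hxy) as [c [Hc _]].
  rewrite (derive_pt_eq_0 F c (dF c) (pr c) (HdF c)) in Hc. specialize (HdFb c). nra.
Qed.

Lemma F_inj x y : F x = F y -> x = y.
Proof.
  intro H. destruct (Rtotal_order x y) as [h|[h|h]]; auto; apply F_increasing in h; lra.
Qed.

Lemma F_InUnit_range y : InUnit y -> 0 <= F y < INR l.
Proof.
  intros [H1 H2]. assert (HF1' : F 1 = INR l) by (rewrite <- (Rplus_0_l 1), HF1, HF0; ring).
  split.
  - destruct (Req_dec y 0) as [->|]; [lra|]. rewrite <- HF0. left. apply F_increasing. lra.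
  - rewrite <- HF1'. apply F_increasing. lra.
Qed.

Lemma l_pos : 0 < INR l.
Proof. pose proof (F_InUnit_range 0 ltac:(split; lra)). lra. Qed.

Lemma iter_E_InUnit n y : InUnit y -> InUnit (Nat.iter n E y).
Proof. intro H. destruct n; [exact H|]. apply Rfrac_InUnit. Qed.

Lemma fst_iter_fmap n p : fst (Nat.iter n f p) = Nat.iter n E (fst p).
Proof. induction n as [|n IH]; simpl; [reflexivity|]. now rewrite IH. Qed.

Lemma iter_fmap_InUnit n p : InUnit (fst p) -> InUnit (snd p) ->
  InUnit (fst (Nat.iter n f p)) /\ InUnit (snd (Nat.iter n f p)).
Proof. intros H1 H2. destruct n; [auto|]. split; apply Rfrac_InUnit. Qed.

Fixpoint birkhoff_sum (n : nat) (y : R) : R :=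
  match n with O => 0 | S k => birkhoff_sum k y + tau (Nat.iter k E y) end.

Lemma snd_iter_fmap n y s : exists k : Z, snd (Nat.iter n f (y, s)) = s + birkhoff_sum n y + IZR k.
Proof.
  induction n as [|n [k Hk]]; [exists 0%Z; simpl; ring|].
  set (p := Nat.iter n f (y, s)).
  exists (k - Rfloor (snd p + tau (fst p)))%Z.
  change (snd (f p) = s + birkhoff_sum (S n) y + IZR (k - Rfloor (snd p + tau (fst p)))).
  unfold fmap, Rfrac. cbn [snd birkhoff_sum]. rewrite minus_IZR.
  unfold p. rewrite fst_iter_fmap, Hk. simpl fst. ring.
Qed.

(* The fibre coordinate moves by the same Birkhoff sum mod 1, so it is determined by its image. *)
Lemma iter_fmap_snd_inj n y s1 s2 : InUnit s1 -> InUnit s2 ->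
  snd (Nat.iter n f (y, s1)) = snd (Nat.iter n f (y, s2)) -> s1 = s2.
Proof.
  intros [H1 H2] [H3 H4] H.
  destruct (snd_iter_fmap n y s1) as [k1 E1], (snd_iter_fmap n y s2) as [k2 E2].
  rewrite E1, E2 in H.
  assert (Hk : s1 - s2 = IZR (k2 - k1)) by (rewrite minus_IZR; lra).
  assert (Hlo : IZR (-1) < IZR (k2 - k1)) by lra. assert (Hhi : IZR (k2 - k1) < IZR 1) by lra.
  apply lt_IZR in Hlo, Hhi. replace (k2 - k1)%Z with 0%Z in Hk by lia. simpl in Hk. lra.
Qed.

(* The word [alpha] with [y = x_alpha]: its [i]-th entry is the branch of [E] containing [E^i y]. *)
Definition itinerary (n : nat) (y : R) : list nat :=
  map (fun i => Z.to_nat (Rfloor (F (Nat.iter i E y)))) (seq 0 n).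

Lemma itinerary_length n y : length (itinerary n y) = n.
Proof. unfold itinerary. now rewrite length_map, length_seq. Qed.

Lemma itinerary_S n y : itinerary (S n) y = Z.to_nat (Rfloor (F y)) :: itinerary n (E y).
Proof.
  unfold itinerary. simpl. f_equal. rewrite <- seq_shift, map_map. apply map_ext. intro i.
  now rewrite Nat.iter_succ_r.
Qed.

Lemma nth_itinerary n y i : (i < n)%nat ->
  nth i (itinerary n y) 0%nat = Z.to_nat (Rfloor (F (Nat.iter i E y))).
Proof.
  intro Hi. unfold itinerary. set (g := fun i => Z.to_nat (Rfloor (F (Nat.iter i E y)))).
  rewrite (nth_indep _ _ (g 0%nat)) by now rewrite length_map, length_seq.
  now rewrite map_nth, seq_nth.
Qed.

Lemma Rfloor_F_bounds y : InUnit y ->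
  (0 <= Rfloor (F y))%Z /\ INR (Z.to_nat (Rfloor (F y))) <= F y < INR (Z.to_nat (Rfloor (F y))) + 1.
Proof.
  intro Hy. pose proof (F_InUnit_range y Hy) as [H1 _].
  pose proof (Rfloor_nonneg _ H1) as H0. pose proof (Rfloor_spec (F y)).
  rewrite INR_IZR_INZ, Z2Nat.id by exact H0. auto.
Qed.

Lemma itinerary_inj n y1 y2 : InUnit y1 -> InUnit y2 -> Nat.iter n E y1 = Nat.iter n E y2 ->
  itinerary n y1 = itinerary n y2 -> y1 = y2.
Proof.
  revert y1 y2. induction n as [|n IH]; intros y1 y2 U1 U2 Hend Hw; [exact Hend|].
  rewrite !itinerary_S in Hw. injection Hw as Hh Ht. rewrite !Nat.iter_succ_r in Hend.
  assert (HE : E y1 = E y2) by (apply IH; auto; apply Rfrac_InUnit).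
  destruct (Rfloor_F_bounds y1 U1) as [G1 _], (Rfloor_F_bounds y2 U2) as [G2 _].
  assert (Hfl : Rfloor (F y1) = Rfloor (F y2)) by lia.
  unfold Emap, Rfrac in HE. rewrite Hfl in HE. apply F_inj. lra.
Qed.

Lemma itinerary_is_word n y : InUnit y -> is_word l n (itinerary n y).
Proof.
  intro U. split; [apply itinerary_length|]. apply Forall_forall. intros a Ha.
  unfold itinerary in Ha. apply in_map_iff in Ha. destruct Ha as [i [<- _]].
  pose proof (iter_E_InUnit i y U) as Ui.
  destruct (Rfloor_F_bounds _ Ui) as [_ [Hlo _]]. pose proof (F_InUnit_range _ Ui) as [_ Hhi].
  apply INR_lt. lra.
Qed.

Lemma itinerary_x_alpha n y : InUnit y -> is_x_alpha F (Nat.iter n E y) (itinerary n y) y.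
Proof.
  intro U. split; [exact U|]. rewrite itinerary_length. split; [reflexivity|]. intros i Hi.
  rewrite nth_itinerary by exact Hi. pose proof (iter_E_InUnit i y U) as Ui.
  split; [exact Ui|]. apply Rfloor_F_bounds, Ui.
Qed.

Lemma trunc_itinerary p n y : (p <= n)%nat ->
  trunc p (itinerary n y) = itinerary p (Nat.iter (n - p) E y).
Proof.
  intro Hp. unfold trunc. apply nth_ext with (d := 0%nat) (d' := 0%nat).
  - rewrite length_skipn, !itinerary_length. lia.
  - intros i Hi. rewrite length_skipn, itinerary_length in Hi.
    rewrite nth_skipn, itinerary_length, !nth_itinerary by lia.
    now rewrite <- Nat.iter_add, (Nat.add_comm (n - p) i).
Qed.

Fixpoint words (n : nat) : list (list nat) :=
  match n with
  | O => nil :: nil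
  | S k => flat_map (fun a => map (cons a) (words k)) (seq 0 l)
  end.

Lemma In_words n w : In w (words n) <-> is_word l n w.
Proof.
  revert w. induction n as [|n IH]; intros w; simpl.
  - split; [intros [<-|[]]; split; auto|]. intros [Hlen _]. destruct w; [now left|discriminate].
  - rewrite in_flat_map. split.
    + intros [a [Ha Hw]]. apply in_map_iff in Hw. destruct Hw as [w' [<- Hw']].
      apply IH in Hw'. destruct Hw' as [H1 H2]. apply in_seq in Ha.
      split; [simpl; auto|]. constructor; [lia|exact H2].
    + intros [Hlen Hf]. destruct w as [|a w]; [discriminate|]. inversion Hf; subst.
      exists a. split; [apply in_seq; lia|]. apply in_map, IH. split; auto.
Qed.

Lemma words_NoDup n : NoDup (words n).
Proof.
  induction n as [|n IH]; simpl; [repeat constructor; auto|].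
  induction (seq_NoDup l 0) as [|a As HaAs HAs IHAs]; simpl; [constructor|].
  apply NoDup_app.
  - apply NoDup_map_NoDup_ForallPairs; [|exact IH]. intros x y _ _ Hxy. now injection Hxy.
  - exact IHAs.
  - intros w Hw Hw'. apply in_map_iff in Hw. destruct Hw as [w1 [<- _]].
    apply in_flat_map in Hw'. destruct Hw' as [b [Hb Hw']].
    apply in_map_iff in Hw'. destruct Hw' as [w2 [Heq _]]. injection Heq as -> _. contradiction.
Qed.

Lemma words_length n : length (words n) = (l ^ n)%nat.
Proof.
  induction n as [|n IH]; simpl; [reflexivity|].
  rewrite (flat_map_constant_length (c := length (words n))) by (intros; apply length_map).
  now rewrite length_seq, IH.
Qed.

Lemma Dfn_shape n y : m11 (Df n y) = dEn F dF n y /\ m12 (Df n y) = 0 /\ m22 (Df n y) = 1.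
Proof.
  revert y. induction n as [|n IH]; intro y; simpl; [auto|].
  destruct (IH (E y)) as [H1 [H2 H3]]. rewrite H1, H2, H3. repeat split; ring.
Qed.

Lemma dEn_bounds n y : lam ^ n <= dEn F dF n y <= Lam ^ n.
Proof.
  revert y. induction n as [|n IH]; intro y; simpl; [lra|].
  destruct (IH (E y)). specialize (HdFb y). assert (0 <= lam ^ n) by (apply pow_le; lra). nra.
Qed.

Lemma dEn_pos n y : 0 < dEn F dF n y.
Proof. pose proof (dEn_bounds n y). pose proof (pow_lt lam n ltac:(lra)). lra. Qed.

Lemma mapply_Dfn_add p k y w :
  mapply (Df (p + k) y) w = mapply (Df p (Nat.iter k E y)) (mapply (Df k y) w).
Proof.
  revert y w. induction k as [|k IH]; intros y w.
  - rewrite Nat.add_0_r. destruct w. unfold mapply. simpl. f_equal; ring.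
  - rewrite Nat.add_succ_r. simpl Df. rewrite !mapply_mmul, IH, <- Nat.iter_succ_r. reflexivity.
Qed.

Lemma theta_pos : 0 < theta.
Proof.
  unfold thetaR. pose proof (Hdtau 0). pose proof (Rabs_pos (dtau 0)). apply Rdiv_lt_0_compat; lra.
Qed.

(* Invariance rests on [theta (lam - 1) = Rc > |tau'|]. *)
Lemma cone_Dfmat y w : cone theta w -> cone theta (mapply (Dfmat dF dtau y) w).
Proof.
  destruct w as [w1 w2]. unfold cone, mapply, Dfmat. cbn -[thetaR]. intro Hw.
  assert (Ht : theta * (lam - 1) = Rc) by (unfold thetaR; field; lra).
  pose proof theta_pos. pose proof (HdFb y). pose proof (Hdtau y). pose proof (Rabs_pos w1).
  replace (dF y * w1 + 0 * w2) with (dF y * w1) by ring.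
  replace (dtau y * w1 + 1 * w2) with (dtau y * w1 + w2) by ring.
  rewrite Rabs_mult, (Rabs_pos_eq (dF y)) by lra.
  eapply Rle_trans; [apply Rabs_triang|]. rewrite Rabs_mult.
  assert (Rabs (dtau y) * Rabs w1 <= Rc * Rabs w1) by (apply Rmult_le_compat_r; lra).
  assert (theta * lam * Rabs w1 <= theta * dF y * Rabs w1)
    by (apply Rmult_le_compat_r; [lra|]; apply Rmult_le_compat_l; lra).
  nra.
Qed.

Lemma cone_Dfn n y w : cone theta w -> cone theta (mapply (Df n y) w).
Proof.
  revert y w. induction n as [|n IH]; intros y w H.
  - destruct w as [w1 w2]. unfold mapply, cone in *. simpl in *.
    now replace (1 * w1 + 0 * w2) with w1 by ring; replace (0 * w1 + 1 * w2) with w2 by ring.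
  - simpl Df. rewrite mapply_mmul. apply IH, cone_Dfmat, H.
Qed.

Definition pullback_dir (p : nat) (y : R) (v : R * R) : R * R :=
  normalize (lower_inv_apply (Df p y) v).

Lemma pullback_dir_unit p y v : unit_vec v -> unit_vec (pullback_dir p y v).
Proof.
  destruct v as [v1 v2]. intro Hv. apply normalize_unit.
  destruct (Dfn_shape p y) as [D1 _]. pose proof (dEn_pos p y).
  unfold lower_inv_apply. simpl. intro H0. injection H0 as H1 H2. rewrite D1 in H1, H2.
  assert (v1 = 0) as ->.
  { destruct (Rmult_integral _ _ H1) as [|Hinv]; [assumption|].
    exfalso. apply (Rinv_neq_0_compat (dEn F dF p y)); lra. }
  unfold Rdiv in H2. rewrite Rmult_0_l, Rmult_0_r, Rminus_0_r in H2. subst.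
  unfold unit_vec in Hv. simpl in Hv. lra.
Qed.

Lemma in_img_cone_Dfn_split p k y v : unit_vec v -> in_img_cone (Df (p + k) y) theta v ->
  in_img_cone (Df p (Nat.iter k E y)) theta v /\
  in_img_cone (Df k y) theta (pullback_dir p (Nat.iter k E y) v).
Proof.
  intros Hv [w [Hw Hvw]]. rewrite mapply_Dfn_add in Hvw. split.
  - exists (mapply (Df k y) w). split; [apply cone_Dfn, Hw|exact Hvw].
  - destruct (Dfn_shape p (Nat.iter k E y)) as [D1 [D2 D3]].
    pose proof (dEn_pos p (Nat.iter k E y)).
    unfold pullback_dir, normalize. rewrite Hvw, lower_inv_apply_correct by (auto; rewrite D1; lra).
    apply in_img_cone_vscale. exists w. auto.
Qed.

Lemma good_split p k z v zeta : unit_vec v -> good (p + k) z v zeta ->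
  good p z v (Nat.iter k f zeta) /\
  good k (Nat.iter k f zeta) (pullback_dir p (fst (Nat.iter k f zeta)) v) zeta.
Proof.
  intros Hv [U1 [U2 [Hz Hc]]]. rewrite fst_iter_fmap.
  destruct (in_img_cone_Dfn_split p k (fst zeta) v Hv Hc) as [C1 C2].
  destruct (iter_fmap_InUnit k zeta U1 U2) as [W1 W2]. split.
  - split; [exact W1|]. split; [exact W2|].
    split; [now rewrite <- Nat.iter_add|now rewrite fst_iter_fmap].
  - split; [exact U1|]. split; [exact U2|]. split; [reflexivity|exact C2].
Qed.

Lemma good_inj n z v z1 z2 : good n z v z1 -> good n z v z2 ->
  itinerary n (fst z1) = itinerary n (fst z2) -> z1 = z2.
Proof.
  destruct z1 as [y1 s1], z2 as [y2 s2]. intros [A1 [B1 [C1 _]]] [A2 [B2 [C2 _]]] Hw. simpl in *.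
  assert (y1 = y2) as <-.
  { apply (itinerary_inj n); auto.
    pose proof (f_equal fst C1) as G1. pose proof (f_equal fst C2) as G2.
    rewrite fst_iter_fmap in G1, G2. simpl in G1, G2. congruence. }
  f_equal. apply (iter_fmap_snd_inj n y1); auto. now rewrite C1, C2.
Qed.

Notation Nc := (Ncounts F tau dF dtau theta).

Lemma good_NoDup_length_le_lub n N z v L : is_lub (Nc n) N ->
  InUnit (fst z) -> InUnit (snd z) -> unit_vec v ->
  NoDup L -> (forall zeta, In zeta L -> good n z v zeta) -> INR (length L) <= N.
Proof.
  intros [Hub _] U1 U2 Hv HL Hgood.
  destruct (has_card_of_injection (good n z v) (fun zeta => itinerary n (fst zeta)) (words n))
    as [k Hk].
  - intros zeta [Hzeta _]. apply In_words, itinerary_is_word, Hzeta.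
  - intros z1 z2 G1 G2. exact (good_inj n z v z1 z2 G1 G2).
  - apply Rle_trans with (INR k).
    + apply le_INR, (has_card_NoDup_length_le _ _ _ Hk HL Hgood).
    + apply Hub. exists z, v, k. auto.
Qed.

Lemma lub_Ncounts_nonneg n N : is_lub (Nc n) N -> 0 <= N.
Proof.
  intro HN. change 0 with (INR (length (@nil (R * R)))).
  apply (good_NoDup_length_le_lub n N (0, 0) (1, 0) nil HN).
  - split; simpl; lra.
  - split; simpl; lra.
  - unfold unit_vec; simpl; lra.
  - constructor.
  - intros _ [].
Qed.

(* Preimages of [z] under [f^(p+k)] are grouped by their [f^k]-image [w], a good preimage of
   [z] under [f^p]; those in the group of [w] are good preimages of [w] for the pulled-back
   direction. *)
Lemma lub_Ncounts_submult p k Np Nk Npk :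
  is_lub (Nc p) Np -> is_lub (Nc k) Nk -> is_lub (Nc (p + k)) Npk -> Npk <= Np * Nk.
Proof.
  intros Hp Hk Hpk. apply (proj2 Hpk). intros c [z [v [n [Uz1 [Uz2 [Uv [[L [HL [<- HLP]]] ->]]]]]]].
  assert (Hsplit : forall zeta, In zeta L -> good p z v (Nat.iter k f zeta) /\
            good k (Nat.iter k f zeta) (pullback_dir p (fst (Nat.iter k f zeta)) v) zeta)
    by (intros zeta Hz; apply good_split, HLP; auto).
  destruct (has_card_of_injection (good p z v) (fun zeta => itinerary p (fst zeta)) (words p))
    as [np [W [HW [HWlen HWP]]]].
  { intros zeta [Hzeta _]. apply In_words, itinerary_is_word, Hzeta. }
  { intros z1 z2 G1 G2. exact (good_inj p z v z1 z2 G1 G2). }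
  set (same := fun w zeta => if R2_eq_dec (Nat.iter k f zeta) w then true else false).
  apply Rle_trans with (INR (list_sum (map (fun w => length (filter (same w) L)) W))).
  { apply le_INR, length_le_sum_filter. intros zeta Hz. exists (Nat.iter k f zeta). split.
    - apply HWP, Hsplit, Hz.
    - unfold same. now destruct (R2_eq_dec _ _). }
  apply Rle_trans with (INR (length W) * Nk).
  - apply INR_list_sum_map_le. intros w Hw. apply HWP in Hw as [Uw1 [Uw2 _]].
    apply (good_NoDup_length_le_lub k Nk w (pullback_dir p (fst w) v)); auto.
    + apply pullback_dir_unit, Uv.
    + apply NoDup_filter, HL.
    + intros zeta Hz. apply filter_In in Hz as [Hz Hsame]. unfold same in Hsame.
      destruct (R2_eq_dec (Nat.iter k f zeta) w) as [<-|]; [apply Hsplit, Hz|discriminate].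
  - apply Rmult_le_compat_r; [exact (lub_Ncounts_nonneg k Nk Hk)|].
    rewrite HWlen. apply (proj1 Hp). exists z, v, np.
    do 3 (split; [assumption|]). split; [exists W; auto|reflexivity].
Qed.

Lemma lub_Ncounts_attained n N : is_lub (Nc n) N -> exists z v k,
  InUnit (fst z) /\ InUnit (snd z) /\ unit_vec v /\ has_card (good n z v) k /\ N = INR k.
Proof.
  intros [Hub Hleast].
  destruct (classic (exists c, Nc n c /\ N - 1 < c)) as [[c [Hc Hlt]]|Hnone].
  - pose proof (Hub c Hc) as Hle.
    destruct Hc as [z [v [k [U1 [U2 [Uv [Hk ->]]]]]]]. exists z, v, k. do 4 (split; [auto|]).
    apply Rle_antisym; [|exact Hle]. apply Hleast.
    intros c' [z' [v' [k' [U1' [U2' [Uv' [Hk' ->]]]]]]].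
    assert (INR k' <= N) by (apply Hub; exists z', v', k'; auto).
    assert (Hlt' : INR k' < INR (k + 1)) by (rewrite plus_INR; simpl; lra).
    apply INR_lt in Hlt'. apply le_INR. lia.
  - exfalso. assert (N <= N - 1); [|lra]. apply Hleast. intros c Hc.
    apply Rnot_lt_le. intro. apply Hnone. exists c. auto.
Qed.

Section Growth.
Variables (Nseq : nat -> R) (Lm rho : R).
Hypothesis HN : forall n, is_lub (Nc n) (Nseq n).
Hypothesis Hcv : Un_cv (fun n => Rpower (Nseq n) (/ INR n)) Lm.
Hypothesis HLm : exp rho <= Lm.
Hypothesis Hrho : 0 < rho.

Lemma Nseq_nonneg n : 0 <= Nseq n.
Proof. exact (lub_Ncounts_nonneg n _ (HN n)). Qed.

Lemma Nseq_mul_le_pow k n : (1 <= k)%nat -> Nseq (k * n) <= Nseq n ^ k.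
Proof.
  induction k as [|k IH]; intro Hk; [lia|]. destruct k as [|k]; [rewrite Nat.mul_1_l; simpl; lra|].
  rewrite Nat.mul_succ_l. specialize (IH ltac:(lia)). pose proof (Nseq_nonneg n).
  apply Rle_trans with (Nseq (S k * n) * Nseq n);
    [exact (lub_Ncounts_submult _ _ _ _ _ (HN (S k * n)) (HN n) (HN (S k * n + n)))|].
  change (Nseq n ^ S (S k)) with (Nseq n * Nseq n ^ S k). rewrite Rmult_comm.
  apply Rmult_le_compat_l; assumption.
Qed.

Lemma Rpower_Nseq_mul_le k n : (1 <= k)%nat -> (1 <= n)%nat ->
  Rpower (Nseq (k * n)) (/ INR (k * n)) <= Rmax 1 (exp (ln (Nseq n) / INR n)).
Proof.
  intros Hk Hn. unfold Rpower.
  destruct (Rlt_dec 0 (Nseq (k * n))) as [Hp|Hp];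
    [|rewrite (ln_nonpos _ Hp), Rmult_0_r, exp_0; apply Rmax_l].
  pose proof (Nseq_mul_le_pow k n Hk) as Hm.
  assert (Hc : 0 < Nseq n).
  { destruct (Rlt_dec 0 (Nseq n)) as [|Hc]; [assumption|].
    assert (Nseq n = 0) as Hz by (pose proof (Nseq_nonneg n); lra).
    rewrite Hz, pow_i in Hm by lia. lra. }
  assert (Hln : ln (Nseq (k * n)) <= INR k * ln (Nseq n))
    by (rewrite <- ln_pow by exact Hc; apply ln_le_compat; assumption).
  apply Rle_trans with (exp (ln (Nseq n) / INR n)); [|apply Rmax_r].
  apply exp_le_compat. rewrite mult_INR.
  pose proof (lt_0_INR k ltac:(lia)). pose proof (lt_0_INR n ltac:(lia)).
  replace (ln (Nseq n) / INR n) with (/ (INR k * INR n) * (INR k * ln (Nseq n))) by (field; lra).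
  apply Rmult_le_compat_l; [left; apply Rinv_0_lt_compat; nra|exact Hln].
Qed.

(* If [Nseq n < e^(rho n)], the bound above keeps the whole subsequence [Nseq (k n)^(1/kn)]
   below a constant [< e^rho <= Lm], against its convergence to [Lm]. *)
Lemma Nseq_ge_exp n : (1 <= n)%nat -> exp (rho * INR n) <= Nseq n.
Proof.
  intro Hn. apply Rnot_lt_le. intro Hc. pose proof (lt_0_INR n ltac:(lia)) as Hn'.
  set (Mx := Rmax 1 (exp (ln (Nseq n) / INR n))).
  assert (HMx : Mx < exp rho).
  { apply Rmax_lub_lt; [rewrite <- exp_0; apply exp_increasing; lra|].
    apply exp_increasing. apply (Rmult_lt_reg_r (INR n)); [exact Hn'|].
    unfold Rdiv. rewrite Rmult_assoc, Rinv_l, Rmult_1_r by lra.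
    destruct (Rlt_dec 0 (Nseq n)) as [Hp|Hp].
    - rewrite <- (ln_exp (rho * INR n)). apply ln_increasing; assumption.
    - rewrite ln_nonpos by exact Hp. nra. }
  destruct (Hcv (Lm - Mx)) as [N0 HN0]; [lra|].
  specialize (HN0 (S N0 * n)%nat ltac:(nia)). unfold R_dist in HN0. apply Rabs_def2 in HN0.
  pose proof (Rpower_Nseq_mul_le (S N0) n ltac:(lia) Hn) as Hb. fold Mx in Hb. lra.
Qed.

(* Were [Nseq n < e^(q rho / 2) Nseq (n - q)] for all large [n], [Nseq] would grow at rate at
   most [e^(rho / 2)], below the rate [e^rho] of [Nseq_ge_exp]. *)
Lemma exists_growth_time q m : (1 <= q)%nat -> exists n, (m <= n)%nat /\ (q + 1 <= n)%nat /\
  exp (INR q * rho / 2) * Nseq (n - q) <= Nseq n.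
Proof.
  intro Hq. apply NNPP. intro Hnone.
  set (n0 := (m + q + 1)%nat). set (e := exp (INR q * rho / 2)). set (N0 := Nseq n0).
  assert (Hslow : forall n, (n0 <= n)%nat -> Nseq n < e * Nseq (n - q)).
  { intros n Hn. apply Rnot_le_lt. intro H. apply Hnone. exists n. unfold n0 in Hn.
    split; [lia|split; [lia|exact H]]. }
  assert (Hiter : forall k, Nseq (n0 + k * q) <= e ^ k * N0).
  { induction k as [|k IH]; [rewrite Nat.mul_0_l, Nat.add_0_r; simpl; unfold N0; lra|].
    pose proof (Hslow (n0 + S k * q)%nat ltac:(lia)) as H.
    replace (n0 + S k * q - q)%nat with (n0 + k * q)%nat in H by lia.
    change (e ^ S k) with (e * e ^ k). pose proof (exp_pos (INR q * rho / 2)).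
    apply Rmult_le_compat_l with (r := e) in IH; unfold e in *; lra. }
  destruct (INR_unbounded (2 * N0 / rho)) as [k Hk].
  specialize (Hiter k). pose proof (Nseq_ge_exp (n0 + k * q) ltac:(lia)) as Hlow.
  unfold e in Hiter. rewrite exp_pow_INR in Hiter. rewrite plus_INR, mult_INR in Hlow.
  set (X := exp (INR k * (INR q * rho / 2))) in *.
  assert (HX : exp (rho * (INR n0 + INR k * INR q)) = exp (rho * INR n0) * (X * X))
    by (unfold X; rewrite <- !exp_plus; f_equal; field).
  assert (H1 : 1 <= exp (rho * INR n0)).
  { rewrite <- exp_0. apply exp_le_compat. pose proof (pos_INR n0). nra. }
  pose proof (exp_pos (INR k * (INR q * rho / 2))) as HX0. fold X in HX0.
  assert (HXN : X <= N0) by nra.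
  assert (Hq' : 1 <= INR q) by (apply (le_INR 1); lia).
  assert (Hbig : N0 < INR k * (INR q * rho / 2)).
  { apply (Rmult_gt_compat_r rho) in Hk; [|exact Hrho]. unfold Rdiv in Hk.
    rewrite Rmult_assoc, Rinv_l, Rmult_1_r in Hk by lra. pose proof (pos_INR k). nra. }
  pose proof (exp_ineq1_le (INR k * (INR q * rho / 2))) as Hineq. fold X in Hineq. lra.
Qed.

End Growth.

Lemma dEn_in_some_window (J : nat) (a b : nat -> R) n y : (1 <= n)%nat ->
  (forall t, ln lam <= t <= ln Lam -> exists j, (1 <= j <= J)%nat /\ a j < t < b j) ->
  exists j, (1 <= j <= J)%nat /\ exp (a j * INR n) <= dEn F dF n y <= exp (b j * INR n).
Proof.
  intros Hn Hcov. set (d := dEn F dF n y). pose proof (dEn_bounds n y) as [D1 D2]. fold d in D1, D2.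
  pose proof (lt_0_INR n ltac:(lia)) as Hn0. pose proof (pow_lt lam n ltac:(lra)).
  assert (T1 : INR n * ln lam <= ln d) by (rewrite <- ln_pow by lra; apply ln_le_compat; lra).
  assert (T2 : ln d <= INR n * ln Lam)
    by (rewrite <- ln_pow by (specialize (HdFb 0); lra); apply ln_le_compat; lra).
  destruct (Hcov (ln d / INR n)) as [j [Hj [A1 A2]]].
  { split; apply (Rmult_le_reg_r (INR n)); unfold Rdiv;
      rewrite ?Rmult_assoc, ?Rinv_l, ?Rmult_1_r by lra; lra. }
  exists j. split; [exact Hj|].
  apply (Rmult_lt_compat_r (INR n)) in A1, A2; [|exact Hn0|exact Hn0].
  unfold Rdiv in A1, A2. rewrite Rmult_assoc, Rinv_l, Rmult_1_r in A1, A2 by lra.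
  rewrite <- (exp_ln d) by lra. split; left; apply exp_increasing; lra.
Qed.

Section Selection.
Variables (rho : R) (q J K n : nat) (a b : nat -> R) (z v : R * R) (L : list (R * R)) (Nq : R).
Hypothesis Hqn : (q + 1 <= n)%nat.
Hypothesis Hcov : forall t, ln lam <= t <= ln Lam -> exists j, (1 <= j <= J)%nat /\ a j < t < b j.
Hypothesis HNq : is_lub (Nc (n - q)) Nq.
Hypothesis Uv : unit_vec v.
Hypothesis HL : NoDup L.
Hypothesis HLgood : forall zeta, In zeta L -> good n z v zeta.

Definition window (j : nat) (zeta : R * R) : bool :=
  in_window (exp (a j * INR n)) (exp (b j * INR n)) (dEn F dF n (fst zeta)).

Definition tail_word (zeta : R * R) : list nat := itinerary q (Nat.iter (n - q) E (fst zeta)).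

Definition tail_class (Lj : list (R * R)) (beta : list nat) : list (R * R) :=
  filter (fun zeta => if list_eq_dec Nat.eq_dec (tail_word zeta) beta then true else false) Lj.

Lemma In_tail_class Lj beta zeta :
  In zeta (tail_class Lj beta) <-> In zeta Lj /\ tail_word zeta = beta.
Proof.
  unfold tail_class. rewrite filter_In.
  destruct (list_eq_dec Nat.eq_dec (tail_word zeta) beta); intuition discriminate.
Qed.

Lemma exists_heavy_window : exists j, (1 <= j <= J)%nat /\
  (length L <= J * length (filter (window j) L))%nat.
Proof.
  assert (HJ : (1 <= J)%nat).
  { destruct (Hcov (ln lam)) as [j [Hj _]]; [|lia]. pose proof (HdFb 0).
    split; [lra|apply ln_le_compat; lra]. }
  destruct (pigeonhole_filter window (seq 1 J) L) as [j [Hj Hlen]].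
  - destruct J; [lia|discriminate].
  - intros zeta _. destruct (dEn_in_some_window J a b n (fst zeta) ltac:(lia) Hcov) as [j [Hj Hw]].
    exists j. split; [apply in_seq; lia|]. apply in_window_spec, Hw.
  - exists j. rewrite length_seq in Hlen. apply in_seq in Hj. split; [lia|exact Hlen].
Qed.

(* All preimages with the same tail word have the same [f^(n-q)]-image [w], and are good
   preimages of [w] at time [n - q]. *)
Lemma tail_class_length_le Lj beta : incl Lj L -> NoDup Lj ->
  INR (length (tail_class Lj beta)) <= Nq.
Proof.
  intros Hsub HLj. destruct (tail_class Lj beta) as [|zeta0 C] eqn:HC;
    [exact (lub_Ncounts_nonneg _ _ HNq)|]. rewrite <- HC.
  assert (Hsplit : forall zeta, In zeta (tail_class Lj beta) ->
            good q z v (Nat.iter (n - q) f zeta) /\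
            good (n - q) (Nat.iter (n - q) f zeta)
              (pullback_dir q (fst (Nat.iter (n - q) f zeta)) v) zeta /\
            itinerary q (fst (Nat.iter (n - q) f zeta)) = beta).
  { intros zeta Hz. apply In_tail_class in Hz as [Hz Hbeta].
    pose proof (HLgood zeta (Hsub zeta Hz)) as G. replace n with (q + (n - q))%nat in G by lia.
    destruct (good_split q (n - q) z v zeta Uv G) as [G1 G2].
    split; [exact G1|]. split; [exact G2|]. now rewrite fst_iter_fmap. }
  assert (Hz0 : In zeta0 (tail_class Lj beta)) by (rewrite HC; left; reflexivity).
  set (w0 := Nat.iter (n - q) f zeta0).
  assert (Hsame : forall zeta, In zeta (tail_class Lj beta) -> Nat.iter (n - q) f zeta = w0).
  { intros zeta Hz. destruct (Hsplit zeta Hz) as [G1 [_ G3]], (Hsplit zeta0 Hz0) as [G1' [_ G3']].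
    apply (good_inj q z v); auto. unfold w0. congruence. }
  destruct (Hsplit zeta0 Hz0) as [[W1 [W2 _]] _]. fold w0 in W1, W2.
  apply (good_NoDup_length_le_lub (n - q) Nq w0 (pullback_dir q (fst w0) v)); auto.
  - apply pullback_dir_unit, Uv.
  - apply NoDup_filter, HLj.
  - intros zeta Hz. destruct (Hsplit zeta Hz) as [_ [G2 _]]. now rewrite (Hsame zeta Hz) in G2.
Qed.

Definition heavy_threshold : R := exp (rho * INR n) / INR l ^ q / (2 * INR J).

Definition heavy_tails (Lj : list (R * R)) : list (list nat) :=
  filter (fun beta => Rleb heavy_threshold (INR (length (tail_class Lj beta)))) (words q).

(* Tail classes below the threshold hold at most [l^q heavy_threshold = e^(rho n) / (2J)]
   preimages, at most half of [length L / J]; each heavy class holds at most [Nq]. *)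
Lemma many_heavy_tails Lj : incl Lj L -> NoDup Lj -> (length L <= J * length Lj)%nat ->
  (1 <= J)%nat -> 0 < Nq ->
  exp (rho * INR n) <= INR (length L) -> exp (INR q * rho / 2) * Nq <= INR (length L) ->
  exp (INR q * rho / 2) / (2 * INR J) <= INR (length (heavy_tails Lj)).
Proof.
  intros Hsub HLj HLLj HJ HNq0 Hlow Hgrow.
  pose proof (lt_0_INR J ltac:(lia)) as HJ'. pose proof (pow_lt _ q l_pos) as Hlq.
  assert (Hthr : INR (length (words q)) * heavy_threshold = exp (rho * INR n) / (2 * INR J))
    by (unfold heavy_threshold; rewrite words_length, pow_INR; field; lra).
  assert (Hcover :
    (length Lj <= list_sum (map (fun beta => length (tail_class Lj beta)) (words q)))%nat).
  { apply length_le_sum_filter. intros zeta Hz. exists (tail_word zeta). split.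
    - apply In_words, itinerary_is_word, iter_E_InUnit, (HLgood zeta (Hsub zeta Hz)).
    - now destruct (list_eq_dec Nat.eq_dec (tail_word zeta) (tail_word zeta)). }
  assert (Hthr0 : 0 <= heavy_threshold).
  { unfold heavy_threshold, Rdiv. pose proof (exp_pos (rho * INR n)).
    apply Rmult_le_pos; [apply Rmult_le_pos|]; left; [lra|apply Rinv_0_lt_compat; lra|].
    apply Rinv_0_lt_compat; lra. }
  pose proof (INR_list_sum_le_heavy (fun beta => length (tail_class Lj beta)) (words q)
                heavy_threshold Nq Hthr0 (fun beta _ => tail_class_length_le Lj beta Hsub HLj))
    as Hsplit.
  rewrite Hthr in Hsplit. fold (heavy_tails Lj) in Hsplit.
  apply le_INR in HLLj, Hcover. rewrite mult_INR in HLLj.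
  set (h := INR (length (heavy_tails Lj))) in *. set (ee := exp (rho * INR n)) in *.
  set (eg := exp (INR q * rho / 2)) in *.
  assert (Hhalf : INR (length L) <= INR J * h * Nq + ee / 2).
  { replace (INR J * h * Nq + ee / 2) with (INR J * (h * Nq + ee / (2 * INR J))) by (field; lra).
    apply Rle_trans with (INR J * INR (length Lj)); [exact HLLj|].
    apply Rmult_le_compat_l; lra. }
  assert (Heg : eg <= 2 * INR J * h) by (apply (Rmult_le_reg_r Nq); nra).
  apply (Rmult_le_reg_l (2 * INR J)); [lra|].
  replace (2 * INR J * (eg / (2 * INR J))) with eg by (field; lra). lra.
Qed.

Lemma select_heavy_tails : 0 < Nq ->
  INR (2 * (q + 1) * K) < exp (INR q * rho / 2) / (2 * INR J) ->
  exp (rho * INR n) <= INR (length L) -> exp (INR q * rho / 2) * Nq <= INR (length L) ->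
  exists (j : nat) (B : list (list nat)) (Sig : list nat -> list (list nat)),
    (1 <= j <= J)%nat /\ NoDup B /\ length B = (2 * (q + 1) * K)%nat /\
    forall beta, In beta B ->
      is_word l q beta /\ NoDup (Sig beta) /\
      INR (length (Sig beta)) >= exp (rho * INR n) / INR l ^ q / (2 * INR J) /\
      forall alpha, In alpha (Sig beta) ->
        is_word l n alpha /\ trunc q alpha = beta /\
        exists y, is_x_alpha F (fst z) alpha y /\ in_img_cone (Df n y) theta v /\
          exp (a j * INR n) <= dEn F dF n y <= exp (b j * INR n).
Proof.
  intros HNq0 HK Hlow Hgrow.
  destruct exists_heavy_window as [j [Hj HLLj]].
  set (Lj := filter (window j) L) in HLLj.
  assert (Hsub : incl Lj L) by (intros zeta Hz; apply filter_In in Hz; tauto).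
  assert (HLj : NoDup Lj) by apply NoDup_filter, HL.
  pose proof (many_heavy_tails Lj Hsub HLj HLLj ltac:(lia) HNq0 Hlow Hgrow) as Hmany.
  destruct (NoDup_sublist_of_length (heavy_tails Lj) (2 * (q + 1) * K))
    as [B [HB [HBlen HBsub]]].
  { apply NoDup_filter, words_NoDup. }
  { apply INR_le. lra. }
  exists j, B, (fun beta => map (fun zeta => itinerary n (fst zeta)) (tail_class Lj beta)).
  split; [exact Hj|]. split; [exact HB|]. split; [exact HBlen|].
  intros beta Hbeta. apply HBsub, filter_In in Hbeta as [Hw Hheavy].
  split; [apply In_words, Hw|]. split; [|split].
  - apply NoDup_map_NoDup_ForallPairs; [|apply NoDup_filter, HLj].
    intros z1 z2 H1 H2. apply In_tail_class in H1 as [H1 _], H2 as [H2 _].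
    apply (good_inj n z v); apply HLgood, Hsub; assumption.
  - rewrite length_map. apply Rle_ge, Rleb_spec, Hheavy.
  - intros alpha Halpha. apply in_map_iff in Halpha as [zeta [<- Hz]].
    apply In_tail_class in Hz as [HzLj Htail].
    pose proof HzLj as Hwin. apply filter_In in Hwin as [HzL Hwin].
    destruct (HLgood zeta HzL) as [Z1 [Z2 [Z3 Z4]]].
    split; [apply itinerary_is_word, Z1|].
    split; [rewrite trunc_itinerary by lia; exact Htail|].
    exists (fst zeta). split; [|split; [exact Z4|apply in_window_spec, Hwin]].
    rewrite <- Z3, fst_iter_fmap. apply itinerary_x_alpha, Z1.
Qed.

End Selection.

End Dynamics.

(* For [J = 0] the hypothesis is void, as [/ 0 = 0] in Stdlib. *)
Lemma lt_exp_div_of_mul_exp_neg (c J : nat) (x : R) :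
  INR c * exp (- x) < / (4 * INR J) -> INR (2 * c) < exp x / (2 * INR J).
Proof.
  intro H. pose proof (pos_INR c). pose proof (exp_pos x) as Hx. rewrite exp_Ropp in H.
  destruct (Nat.eq_dec J 0) as [->|HJ].
  - simpl in H. rewrite Rmult_0_r, Rinv_0 in H. pose proof (Rinv_0_lt_compat _ Hx). nra.
  - pose proof (lt_0_INR J ltac:(lia)). rewrite mult_INR. replace (INR 2) with 2 by (simpl; lra).
    assert (Hc : 4 * INR J * INR c < exp x).
    { apply (Rmult_lt_compat_l (4 * INR J * exp x)) in H; [|nra].
      replace (4 * INR J * exp x * (INR c * / exp x)) with (4 * INR J * INR c) in H by (field; lra).
      replace (4 * INR J * exp x * / (4 * INR J)) with (exp x) in H by (field; lra). exact H. }
    apply (Rmult_lt_reg_l (2 * INR J)); [lra|].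
    replace (2 * INR J * (exp x / (2 * INR J))) with (exp x) by (field; lra). lra.
Qed.

Theorem proposition3p3
  (r l : nat) (F dF tau dtau : R -> R) (lam Lam Rc rho : R)
  (J : nat) (a b : nat -> R) (q : nat) :
  (2 <= r)%nat -> (2 <= l)%nat ->
  is_Cr r F -> (forall x, F (x + 1) = F x + INR l) -> F 0 = 0 ->
  (forall x, derivable_pt_lim F x (dF x)) ->
  1 < lam -> (forall x, lam <= dF x <= Lam) ->
  is_Cr r tau -> (forall x, tau (x + 1) = tau x) ->
  (forall x, derivable_pt_lim tau x (dtau x)) ->
  (exists M, M < Rc /\ forall x, Rabs (dtau x) <= M) ->
  0 < rho ->
  (forall t, ln lam <= t <= ln Lam -> exists j, (1 <= j <= J)%nat /\ a j < t < b j) ->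
  (forall j, (1 <= j <= J)%nat -> b j - a j < rho / 3) ->
  (1 <= q)%nat ->
  INR ((q + 1) * Nconst rho Lam) * exp (- (INR q * rho / 2)) < / (4 * INR J) ->
  (2 * (q + 1) * Nconst rho Lam <= l ^ q)%nat ->
  Ntau_ge F tau dF dtau Rc lam (exp rho) ->
  forall m : nat, exists n : nat, (m <= n)%nat /\ (q <= n)%nat /\
    exists (x s : R) (v0 : R * R) (j : nat) (B : list (list nat))
           (Sig : list nat -> list (list nat)),
      InUnit x /\ InUnit s /\ unit_vec v0 /\ (1 <= j <= J)%nat /\
      NoDup B /\ length B = (2 * (q + 1) * Nconst rho Lam)%nat /\
      forall beta, In beta B ->
        is_word l q beta /\ NoDup (Sig beta) /\
        INR (length (Sig beta)) >= exp (rho * INR n) / INR l ^ q / (2 * INR J) /\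
        forall alpha, In alpha (Sig beta) ->
          is_word l n alpha /\ trunc q alpha = beta /\
          exists y, is_x_alpha F x alpha y /\
            in_img_cone (Dfn F dF dtau n y) (thetaR Rc lam) v0 /\
            exp (a j * INR n) <= dEn F dF n y <= exp (b j * INR n).
Proof.
  intros _ _ _ HF1 HF0 HdF Hlam HdFb _ _ _ [M [HM Hdtau]] Hrho Hcov _ Hq Hqc _
    [Nseq [Lm [HN [Hcv HLm]]]] m.
  destruct (exists_growth_time l F dF tau dtau lam Lam Rc M HF1 HF0 HdF Hlam HdFb HM Hdtau
              Nseq Lm rho HN Hcv HLm Hrho q m Hq) as [n [Hmn [Hqn Hgrow]]].
  exists n. split; [exact Hmn|]. split; [lia|].
  destruct (lub_Ncounts_attained F dF tau dtau lam Rc n (Nseq n) (HN n))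
    as [z [v [k [Uz1 [Uz2 [Uv [[L [HL [Hlen HLP]]] Hk]]]]]]].
  pose proof (Nseq_ge_exp l F dF tau dtau lam Lam Rc M HF1 HF0 HdF Hlam HdFb HM Hdtau
                Nseq Lm rho HN Hcv HLm Hrho) as Hge.
  rewrite Hk, <- Hlen in Hgrow. pose proof (Hge n ltac:(lia)) as Hlow. rewrite Hk, <- Hlen in Hlow.
  destruct (select_heavy_tails l F dF tau dtau lam Lam Rc M HF1 HF0 HdF Hlam HdFb HM Hdtau
              rho q J (Nconst rho Lam) n a b z v L (Nseq (n - q)%nat) Hqn Hcov (HN (n - q)%nat)
              Uv HL (fun zeta Hz => proj1 (HLP zeta) Hz))
    as [j [B [Sig [Hj [HB [HBlen HSig]]]]]].
  - pose proof (Hge (n - q)%nat ltac:(lia)). pose proof (exp_pos (rho * INR (n - q))). lra.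
  - rewrite <- Nat.mul_assoc. apply lt_exp_div_of_mul_exp_neg, Hqc.
  - exact Hlow.
  - exact Hgrow.
  - exists (fst z), (snd z), v, j, B, Sig. repeat (split; [assumption|]). exact HSig.
Qed.
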